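(* Let $\langle\mathcal{D},\sigma,\varphi\rangle$ be a hybrid temporal achievement causal setting. Then $$\mathcal{D}\models\forall\alpha_1,\alpha_2,ts_1,ts_2.\;\big(\mathit{CausesDir}^{\mathit{prim}}_{\mathit{temp}}(\alpha_1,ts_1,\varphi,\sigma)\land\mathit{PrimCause}(\alpha_2,ts_2,\varphi,\sigma)\big)\supset(\alpha_1=\alpha_2\land ts_1=ts_2).$$
   Context: Hybrid temporal situation calculus (HTSC): $S_0$ initial situation, $do(a,s)$ successor situation, $do([a_1,\dots,a_n],s)$ the nesting. $s\sqsubset s'$: $s'$ reachable from $s$ by one or more actions; $s\sqsubseteq s'$: $s\sqsubset s'\lor s=s'$. $\mathit{time}(a(\vec x,t))=t$, $\mathit{start}(do(a,s))=\mathit{time}(a)$. $\mathit{Exec}(s)\doteq\forall a,s'.(do(a,s')\sqsubseteq s\supset\mathit{Poss}(a,s')\land\mathit{start}(s')\le\mathit{time}(a))$; $s<s'$ abbreviates $s\sqsubset s'\land\mathit{Exec}(s')$; $s\le s'$ abbreviates $s<s'\lor s=s'$. $\mathit{timeStamp}(S_0)=0$, $\mathit{timeStamp}(do(a,s))=\mathit{timeStamp}(s)+1$. A hybrid basic action theory $\mathcal{D}$ contains initial-state, precondition, successor-state (discrete fluents), state evolution (temporal fluents), unique-names and foundational axioms. A temporal fluent $f$ has state evolution axiom $f(\vec x,t,s)=y\equiv[\bigvee_i(\gamma^f_i(\vec x,s)\land\delta_i(\vec x,y,t,s))\lor(y=f(\vec x,\mathit{start}(s),s)\land\neg\bigvee_i\gamma^f_i(\vec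 x,s))]$ with mutually exclusive contexts $\gamma^f_i$ (formulas over discrete fluents). An effect $\varphi$ is a situation- and time-suppressed formula, uniform in the situation, constraining the value of one primitive temporal fluent $f$; $\varphi[t,s]$ restores time $t$ and situation $s$; $\psi[s]$ restores $s$ in a situation-suppressed $\psi$. $\mathit{CausesDir}(a,ts,\psi,s)\doteq\exists s_a.\,\mathit{timeStamp}(s_a)=ts\land(S_0<do(a,s_a)\le s)\land\neg\psi[s_a]\land\forall s'.(do(a,s_a)\le s'\le s\supset\psi[s'])$. $\mathit{end}(s',s)=\mathit{start}(s')$ if $s'=s$; $=\mathit{time}(a)$ if $do(a,s')\le s$. $\mathit{AchvSitAux}(s_\varphi,\varphi,s)\doteq\varphi[\mathit{end}(s_\varphi,s),s_\varphi]\land\forall s',t.(s_\varphi<s'\le s\land\mathit{start}(s')\le t\le\mathit{end}(s',s)\supset\varphi[t,s'])$; $\mathit{AchvSit}(s_\varphi,\varphi,s)\doteq\mathit{AchvSitAux}(s_\varphi,\varphi,s)\land\neg\exists s''.(s''<s_\varphi\land\mathit{AchvSitAux}(s'',\varphi,s))$. $\mathit{CausesDir}^{\mathit{prim}}_{\mathit{temp}}(a,ts,\varphi,s)\doteq\exists s_\varphi.\,\mathit{AchvSit}(s_\varphi,\varphi,s)\land\exists i.\,\mathit{CausesDir}(a,ts,\gamma^f_i,s_\varphi)$. Direct possible contributor: $\mathit{DirPossContr}(\alpha,s_\alpha,s_\varphi,\sigma,\varphi)\doteq\exists i,ts.\,\mathit{Exec}(s_\alpha)\land\mathit{Poss}(\alpha,s_\alpha)\land\mathit{timeStamp}(s_\alpha)=ts\land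 s_\alpha<s_\varphi\le\sigma\land\neg\varphi[\mathit{time}(\alpha),s_\alpha]\land\varphi[\mathit{end}(s_\varphi,\sigma),s_\varphi]\land\mathit{CausesDir}(\alpha,ts,\gamma^f_i,s_\varphi)$. Direct actual contributor: $\mathit{DirActContr}(\alpha,s_\alpha,s_\varphi,\varphi,\sigma)\doteq\exists\sigma'.\,\mathit{DirPossContr}(\alpha,s_\alpha,s_\varphi,\sigma',\varphi)\land\sigma'\le\sigma$. Primary cause via contribution: $\mathit{PrimCause}(\alpha,ts,\varphi,\sigma)\doteq\exists s_\alpha,s_\varphi.\,\mathit{AchvSit}(s_\varphi,\varphi,\sigma)\land\mathit{timeStamp}(s_\alpha)=ts\land\mathit{DirActContr}(\alpha,s_\alpha,s_\varphi,\varphi,\sigma)$. Hybrid temporal achievement causal setting $\langle\mathcal{D},\sigma,\varphi\rangle$: $\sigma=do([\alpha_1,\dots,\alpha_n],S_0)$ ground, $n\ge1$, $\mathcal{D}\models\mathit{Exec}(\sigma)\land\neg\varphi[\mathit{start}(S_0),S_0]\land\neg\varphi[\mathit{time}(\alpha_1),S_0]\land\varphi[\mathit{start}(\sigma),\sigma]$. *)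

From Stdlib Require Import Reals List.
Open Scope R_scope.
Set Implicit Arguments.

(* Situations: the (unique, up to isomorphism) model of the foundational
   axioms over an action domain A: the tree generated by S0 and do. *)
Inductive sit (A : Type) : Type :=
| S0 : sit A
| Do : A -> sit A -> sit A.
Arguments S0 {A}.

Fixpoint doL (A : Type) (l : list A) (s : sit A) : sit A :=
  match l with
  | nil => s
  | a :: l' => doL l' (Do a s)
  end.

Definition startf (A : Type) (time : A -> R) (start0 : R) (s : sit A) : R :=
  match s with
  | S0 => start0
  | Do a _ => time a
  end.

Fixpoint timeStamp (A : Type) (s : sit A) : nat :=
  match s with
  | S0 => 0%nat
  | Do _ s' => S (timeStamp s')
  end.

Inductive sub (A : Type) (s : sit A) : sit A -> Prop :=
| sub_one : forall a, sub s (Do a s)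
| sub_step : forall a s', sub s s' -> sub s (Do a s').

Definition subeq (A : Type) (s s' : sit A) : Prop := sub s s' \/ s = s'.

(* A hybrid basic action theory, seen through one of its models:
   actions, the value sort of the primitive temporal fluent f (with its
   object arguments fixed), the contexts gamma_i of f's state evolution
   axiom (finitely many, mutually exclusive, formulas over discrete fluents),
   and the state evolution axiom itself. *)
Record HBAT : Type := {
  act : Type;
  val : Type;
  ctx : Type;
  time : act -> R;
  Poss : act -> sit act -> Prop;
  start0 : R;
  gamma : ctx -> sit act -> Prop;
  delta : ctx -> val -> R -> sit act -> Prop;
  fl : R -> sit act -> val;
  ctx_finite : exists l : list ctx, forall i, In i l;
  ctx_excl : forall i j s, gamma i s -> gamma j s -> i = j;
  sea : forall t s y,
      fl t s = y <->
      ((exists i, gamma i s /\ delta i y t s) \/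
       (y = fl (startf time start0 s) s /\ ~ (exists i, gamma i s)))
}.

Section Defs.
Variable D : HBAT.
Notation A := (act D).
Notation S := (sit (act D)).
Notation start := (startf (time D) (start0 D)).

Definition Exec (s : S) : Prop :=
  forall a s', subeq (Do a s') s -> Poss D a s' /\ start s' <= time D a.

Definition slt (s s' : S) : Prop := sub s s' /\ Exec s'.
Definition sle (s s' : S) : Prop := slt s s' \/ s = s'.

(* An effect phi constrains the value of f: phi[t,s] := Phi (f(t,s)). *)
Definition holds (Phi : val D -> Prop) (t : R) (s : S) : Prop := Phi (fl D t s).

Definition CausesDir (a : A) (ts : nat) (psi : S -> Prop) (s : S) : Prop :=
  exists sa, timeStamp sa = ts /\ slt S0 (Do a sa) /\ sle (Do a sa) s /\
    ~ psi sa /\ (forall s', sle (Do a sa) s' -> sle s' s -> psi s').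

(* end(s', s) as a (partial, functional) relation: t = end(s', s). *)
Definition EndRel (s' s : S) (t : R) : Prop :=
  (s' = s /\ t = start s) \/ (exists a, sle (Do a s') s /\ t = time D a).

Definition AchvSitAux (sphi : S) (Phi : val D -> Prop) (s : S) : Prop :=
  (exists t, EndRel sphi s t /\ holds Phi t sphi) /\
  (forall s' t e, slt sphi s' -> sle s' s -> EndRel s' s e ->
     start s' <= t <= e -> holds Phi t s').

Definition AchvSit (sphi : S) (Phi : val D -> Prop) (s : S) : Prop :=
  AchvSitAux sphi Phi s /\ ~ (exists s'', slt s'' sphi /\ AchvSitAux s'' Phi s).

Definition CausesDirPrimTemp (a : A) (ts : nat) (Phi : val D -> Prop) (s : S)
  : Prop :=
  exists sphi, AchvSit sphi Phi s /\ exists i, CausesDir a ts (gamma D i) sphi.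

Definition DirPossContr (al : A) (sal sphi sig : S) (Phi : val D -> Prop)
  : Prop :=
  exists i ts, Exec sal /\ Poss D al sal /\ timeStamp sal = ts /\
    slt sal sphi /\ sle sphi sig /\ ~ holds Phi (time D al) sal /\
    (exists t, EndRel sphi sig t /\ holds Phi t sphi) /\
    CausesDir al ts (gamma D i) sphi.

Definition DirActContr (al : A) (sal sphi : S) (Phi : val D -> Prop) (sig : S)
  : Prop :=
  exists sig', DirPossContr al sal sphi sig' Phi /\ sle sig' sig.

Definition PrimCause (al : A) (ts : nat) (Phi : val D -> Prop) (sig : S) : Prop :=
  exists sal sphi, AchvSit sphi Phi sig /\ timeStamp sal = ts /\
    DirActContr al sal sphi Phi sig.

(* <D, sigma, phi> with sigma = do([a1 :: rest], S0), n >= 1. *)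
Definition CausalSetting (Phi : val D -> Prop) (a1 : A) (rest : list A) : Prop :=
  let sig := doL (a1 :: rest) S0 in
  Exec sig /\ ~ holds Phi (start S0) S0 /\ ~ holds Phi (time D a1) S0 /\
  holds Phi (start sig) sig.

End Defs.

(* Prefixes of σ are linearly ordered and AchvSit selects the earliest one, so
   the achievement situation s_φ is unique, and both causes are direct causes of
   a context of f's state evolution axiom holding at s_φ.  The contexts are
   mutually exclusive, so it is the same context γ.  Two direct causes of γ at
   s_φ coincide: if one action strictly preceded the other, γ, which persists
   from the earlier action up to s_φ, would already hold just before the later
   action, contradicting that the later one made γ true. *)
From Stdlib Require Import Reals List.

Set Implicit Arguments.

Section Situations.
Variable A : Type.
Implicit Types (a : A) (s x y z : sit A).

Lemma sub_trans x y z : sub x y -> sub y z -> sub x z.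
Proof. intros Hxy Hyz; induction Hyz; constructor 2; auto. Qed.

Lemma subeq_trans x y z : subeq x y -> subeq y z -> subeq x z.
Proof.
  intros [Hxy | <-] [Hyz | <-]; try (left; assumption); try (right; reflexivity).
  left; exact (sub_trans Hxy Hyz).
Qed.

Lemma subeq_Do a s : subeq s (Do a s).
Proof. left; constructor. Qed.

Lemma sub_Do_subeq x a y : sub x (Do a y) -> subeq x y.
Proof. intro H; inversion H; subst; [right | left]; auto. Qed.

Lemma subeq_S0 x : subeq x S0 -> x = S0.
Proof. intros [H | H]; [inversion H | exact H]. Qed.

Lemma subeq_Do_cases x a y : subeq x (Do a y) -> x = Do a y \/ subeq x y.
Proof. intros [H | H]; [right; exact (sub_Do_subeq H) | left; exact H]. Qed.

Lemma subeq_prefix_total x y z : subeq x z -> subeq y z -> subeq x y \/ subeq y x.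
Proof.
  revert x y; induction z as [| a z IH]; intros x y Hx Hy.
  - rewrite (subeq_S0 Hx), (subeq_S0 Hy); left; right; reflexivity.
  - destruct (subeq_Do_cases Hx) as [-> | Hxz], (subeq_Do_cases Hy) as [-> | Hyz].
    + left; right; reflexivity.
    + right; exact (subeq_trans Hyz (subeq_Do a z)).
    + left; exact (subeq_trans Hxz (subeq_Do a z)).
    + exact (IH _ _ Hxz Hyz).
Qed.

End Situations.

Section ActionTheory.
Variable D : HBAT.
Notation S := (sit (act D)).
Implicit Types (s x y : S).

Lemma Exec_subeq x y : subeq x y -> Exec D y -> Exec D x.
Proof. intros Hxy Hy a s' H; apply Hy; exact (subeq_trans H Hxy). Qed.

Lemma sle_subeq x y : sle D x y -> subeq x y.
Proof. intros [[H _] | H]; [left | right]; assumption. Qed.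

Lemma subeq_sle x y : subeq x y -> Exec D y -> sle D x y.
Proof. intros [H | H] Hy; [left; split | right]; assumption. Qed.

Lemma EndRel_subeq x y t : EndRel D x y t -> subeq x y.
Proof.
  intros [[-> _] | [a [H _]]]; [right; reflexivity |].
  exact (subeq_trans (subeq_Do a x) (sle_subeq H)).
Qed.

Lemma AchvSit_subeq Phi x y : AchvSit D x Phi y -> subeq x y.
Proof. intros [[[t [H _]] _] _]; exact (EndRel_subeq H). Qed.

Lemma AchvSit_unique Phi x1 x2 sig : Exec D sig ->
  AchvSit D x1 Phi sig -> AchvSit D x2 Phi sig -> x1 = x2.
Proof.
  intros Hsig H1 H2.
  pose proof (AchvSit_subeq H1) as Hx1; pose proof (AchvSit_subeq H2) as Hx2.
  destruct (subeq_prefix_total Hx1 Hx2) as [[Hlt | Heq] | [Hlt | Heq]]; auto.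
  - exfalso; apply (proj2 H2); exists x1.
    split; [split; [exact Hlt | exact (Exec_subeq Hx2 Hsig)] | apply H1].
  - exfalso; apply (proj2 H1); exists x2.
    split; [split; [exact Hlt | exact (Exec_subeq Hx1 Hsig)] | apply H2].
Qed.

Lemma persists_before_later_action {psi : S -> Prop} a1 sa1 a2 sa2 s :
  Exec D s -> sle D (Do a2 sa2) s ->
  (forall s', sle D (Do a1 sa1) s' -> sle D s' s -> psi s') ->
  sub (Do a1 sa1) (Do a2 sa2) -> psi sa2.
Proof.
  intros Hs H2 Hpersist Hlt.
  assert (Hsa2 : subeq sa2 s) by exact (subeq_trans (subeq_Do a2 sa2) (sle_subeq H2)).
  apply Hpersist.
  - exact (subeq_sle (sub_Do_subeq Hlt) (Exec_subeq Hsa2 Hs)).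
  - exact (subeq_sle Hsa2 Hs).
Qed.

Lemma CausesDir_unique (psi : S -> Prop) a1 ts1 a2 ts2 s : Exec D s ->
  CausesDir D a1 ts1 psi s -> CausesDir D a2 ts2 psi s -> a1 = a2 /\ ts1 = ts2.
Proof.
  intros Hs [sa1 [<- [_ [H1 [N1 P1]]]]] [sa2 [<- [_ [H2 [N2 P2]]]]].
  destruct (subeq_prefix_total (sle_subeq H1) (sle_subeq H2))
    as [[Hlt | Heq] | [Hlt | Heq]].
  - exfalso; exact (N2 (persists_before_later_action Hs H2 P1 Hlt)).
  - injection Heq as -> ->; auto.
  - exfalso; exact (N1 (persists_before_later_action Hs H1 P2 Hlt)).
  - injection Heq as -> ->; auto.
Qed.

Lemma CausesDir_gamma_unique a1 ts1 a2 ts2 {i j : ctx D} s : Exec D s ->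
  CausesDir D a1 ts1 (gamma D i) s -> CausesDir D a2 ts2 (gamma D j) s ->
  a1 = a2 /\ ts1 = ts2.
Proof.
  intros Hs Hc1 Hc2.
  assert (Hij : i = j).
  { destruct Hc1 as [sa1 [_ [_ [H1 [_ P1]]]]], Hc2 as [sa2 [_ [_ [H2 [_ P2]]]]].
    apply (ctx_excl D i j s); [apply P1 | apply P2]; auto; right; reflexivity. }
  subst j; exact (CausesDir_unique Hs Hc1 Hc2).
Qed.

End ActionTheory.

Theorem theorem6p4 :
  forall (D : HBAT) (Phi : val D -> Prop) (a1 : act D) (rest : list (act D)),
    CausalSetting D Phi a1 rest ->
    forall (al1 al2 : act D) (ts1 ts2 : nat),
      CausesDirPrimTemp D al1 ts1 Phi (doL (a1 :: rest) S0) /\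
      PrimCause D al2 ts2 Phi (doL (a1 :: rest) S0) ->
      al1 = al2 /\ ts1 = ts2.
Proof.
  intros D Phi a1 rest [Hexec _] al1 al2 ts1 ts2
    [[sphi1 [Hachv1 [i Hcd1]]] [sal [sphi2 [Hachv2 [<- [sig' [Hcontr _]]]]]]].
  destruct Hcontr as [j [ts [_ [_ [<- [_ [_ [_ [_ Hcd2]]]]]]]]].
  rewrite <- (AchvSit_unique Hexec Hachv1 Hachv2) in Hcd2.
  exact (CausesDir_gamma_unique (Exec_subeq (AchvSit_subeq Hachv1) Hexec) Hcd1 Hcd2).
Qed.
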